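(* Let $p$ be a prime, $\omega_1=e^{2\pi i/p}$, $F\in\mathbb Z[x]$, and $H(x)=\prod_{j=0}^{p-1}F(x\omega_1^j)$. Then $H(x)=g(x^p)$ for some $g\in\mathbb Z[x]$ with $g(x)\equiv F(x)\pmod p$, and $N_i(F)=N_{i-1}(g)$ for all $i\geq 2$, and $F(1)N_1(F)=g(1)$. If moreover $p=3$ and $F(x)=f_0(x^3)+xf_1(x^3)+x^2f_2(x^3)$ with $f_0,f_1,f_2\in\mathbb Z[x]$, then $g(x)=f_0(x)^3+xf_1(x)^3+x^2f_2(x)^3-3xf_0(x)f_1(x)f_2(x)$.
   Context: For $k\geq1$, $\omega_k=e^{2\pi i/p^k}$ and $N_k(F)=\prod_{1\leq \ell\leq p^k,\ p\nmid \ell}F(\omega_k^\ell)$. *)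

From Stdlib Require Import Reals.
From HB Require Import structures.
From mathcomp Require Import all_boot all_order all_algebra.
From mathcomp Require Import complex.
From mathcomp Require Import Rstruct.
Set Implicit Arguments. Unset Strict Implicit. Unset Printing Implicit Defensive.
Import Order.TTheory GRing.Theory Num.Theory.
Local Open Scope ring_scope.

Notation C := (complex Rdefinitions.R).

Definition omega (p k : nat) : C :=
  Complex (Rtrigo_def.cos (2 * Rtrigo1.PI / (p ^ k)%:R))
          (Rtrigo_def.sin (2 * Rtrigo1.PI / (p ^ k)%:R)).

Definition polyC_of_int (F : {poly int}) : {poly C} := map_poly (fun z : int => z%:~R) F.

Definition Nk (p k : nat) (F : {poly int}) : C :=
  \prod_(1 <= l < (p ^ k).+1 | ~~ (p %| l)%N) (polyC_of_int F).[omega p k ^+ l].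

Definition Hpoly (p : nat) (F : {poly int}) : {poly C} :=
  \prod_(j < p) (polyC_of_int F \Po ('X * (omega p 1 ^+ j)%:P)).

From Stdlib Require Import Reals.
From HB Require Import structures.
From mathcomp Require Import all_boot all_order all_algebra all_field.
From mathcomp Require Import complex Rstruct.
From mathcomp Require Import zify ring.
Import Order.TTheory GRing.Theory Num.Theory.
Local Open Scope ring_scope.
Set Implicit Arguments. Unset Strict Implicit. Unset Printing Implicit Defensive.

(* Put t = x^p.  Over R[t] the ring R[x] is free on 1, x, ..., x^(p-1), and g is the
   determinant of multiplication by F(x), i.e. the norm of F from R[x] down to R[x^p].
   Multiplication by x is the companion matrix C of X^p - t; the Vandermonde matrix of
   the distinct roots x w^j of X^p - x^p (w a primitive p-th root of unity) conjugates C
   to a diagonal matrix, so g(x^p) = prod_j F(x w^j) = H(x).  Evaluating at x = w_i^l and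
   splitting l modulo p^(i-1) regroups N_i(F) into N_(i-1)(g); evaluating at x = 1 gives
   g(1) = F(1) N_1(F).  Modulo p, Frobenius gives F(C)^p = F(C^p) = F(t) I, so g^p = F^p
   and hence g = F over F_p.  For p = 3 the three conjugates of F are a + w^j b + w^(2j) c
   with a = f0(x^3), b = x f1(x^3), c = x^2 f2(x^3), whose product is the norm form
   a^3 + b^3 + c^3 - 3abc. *)

Lemma horner_mx_intertwine (R : comNzRingType) m k (A : 'M[R]_m.+1) (B : 'M[R]_k.+1)
    (M : 'M[R]_(m.+1, k.+1)) (q : {poly R}) :
  A *m M = M *m B -> horner_mx A q *m M = M *m horner_mx B q.
Proof.
move=> AM_MB; elim/poly_ind: q => [|q c IHq]; first by rewrite !rmorph0 mul0mx mulmx0.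
rewrite !rmorphD !rmorphM /= !horner_mx_X !horner_mx_C -!mulmxE.
by rewrite mulmxDl mulmxDr -mulmxA AM_MB mulmxA IHq -mulmxA scalar_mxC.
Qed.

Lemma horner_mx_comp_Xn (R : comNzRingType) m (A : 'M[R]_m.+1) (q : {poly R}) k :
  horner_mx A (q \Po 'X^k) = horner_mx (A ^+ k) q.
Proof.
elim/poly_ind: q => [|q c IHq]; first by rewrite comp_poly0 !rmorph0.
by rewrite comp_poly_MXaddC !rmorphD !rmorphM /= !rmorphXn /= IHq !horner_mx_X !horner_mx_C.
Qed.

Lemma det_mxX (R : comNzRingType) m (A : 'M[R]_m.+1) k : \det (A ^+ k) = \det A ^+ k.
Proof. by elim: k => [|k IHk]; rewrite ?det1 // !exprS detM IHk. Qed.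

Lemma ltn_neq_ord_max n (r : 'I_n.+1) : r != ord_max -> (r < n)%N.
Proof.
move=> r_neq; rewrite ltn_neqAle -ltnS ltn_ord andbT.
by apply: contraNneq r_neq => r_n; apply/eqP/val_inj.
Qed.

Section CompanionXn.
Variables (R : comNzRingType) (n : nat).

(* Rows are the images of 1, x, ..., x^n under multiplication by x in R[x]/(x^(n+1) - t). *)
Definition companionXn (t : R) : 'M[R]_n.+1 :=
  \matrix_(r, s) if r == ord_max then (s == ord0)%:R * t else ((s : nat) == r.+1)%:R.

Lemma mul_companionXn t (A : 'M[R]_n.+1) r s :
  (companionXn t *m A) r s = if r == ord_max then t * A ord0 s else A (inord r.+1) s.
Proof.
rewrite mxE; case: eqP => [->|/eqP r_neq].
  rewrite (bigD1 ord0) //= mxE !eqxx mul1r big1 ?addr0 //.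
  by move=> u /negbTE u_neq; rewrite mxE eqxx u_neq !mul0r.
have r_lt : (r.+1 < n.+1)%N by rewrite ltnS ltn_neq_ord_max.
rewrite (bigD1 (inord r.+1)) //= mxE (negbTE r_neq) inordK // eqxx mul1r.
rewrite big1 ?addr0 // => u u_neq; rewrite mxE (negbTE r_neq).
suff /negbTE -> : (u : nat) != r.+1 by rewrite mul0r.
by apply: contra u_neq => /eqP <-; rewrite inord_val.
Qed.

Lemma companionXn_exp t k r s : (k <= n.+1)%N ->
  (companionXn t ^+ k) r s = ((s : nat) == r + k)%N%:R + (s + n.+1 == r + k)%N%:R * t.
Proof.
elim: k r s => [|k IHk] r s k_le; have r_lt := ltn_ord r; have s_lt := ltn_ord s.
  rewrite expr0 mxE addn0 eq_sym; have -> : (s + n.+1 == r)%N = false by lia.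
  by rewrite mul0r addr0.
have k_le' := ltnW k_le.
rewrite exprS mul_companionXn; case: eqP => [->|/eqP r_neq]; rewrite IHk //=.
  have -> : (s + n.+1 == k)%N = false by lia.
  have -> : ((s : nat) == n + k.+1)%N = false by lia.
  rewrite -[(n + k.+1)%N]addSnnS [(n.+1 + k)%N]addnC eqn_add2r add0n.
  by rewrite mul0r addr0 add0r mulrC.
by rewrite inordK ?addSnnS // ltnS ltn_neq_ord_max.
Qed.

Lemma companionXn_expS t : companionXn t ^+ n.+1 = t%:M.
Proof.
apply/matrixP => r s; rewrite companionXn_exp // mxE eqn_add2r; have s_lt := ltn_ord s.
have -> : ((s : nat) == r + n.+1)%N = false by lia.
by rewrite add0r -[(s : nat) == r]/(s == r) eq_sym; case: eqP; rewrite ?mul1r ?mul0r.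
Qed.

Lemma companionXn_Vandermonde t (z : 'rV[R]_n.+1) : (forall j, z 0 j ^+ n.+1 = t) ->
  companionXn t *m Vandermonde n.+1 z = Vandermonde n.+1 z *m diag_mx z.
Proof.
move=> z_root; apply/matrixP => r j; rewrite mul_companionXn mul_mx_diag !mxE.
case: eqP => [->|/eqP r_neq]; first by rewrite expr0 mulr1 -(z_root j) exprSr.
by rewrite inordK ?exprSr // ltnS ltn_neq_ord_max.
Qed.

End CompanionXn.

Lemma map_companionXn (R S : comNzRingType) (f : {rmorphism R -> S}) n t :
  map_mx f (companionXn n t) = companionXn n (f t).
Proof. by apply/matrixP => r s; rewrite !mxE; case: ifP; rewrite ?rmorphM rmorph_nat. Qed.

Lemma det_horner_companionXn (R : idomainType) n t (z : 'rV[R]_n.+1) (q : {poly R}) :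
  injective (z 0) -> (forall j, z 0 j ^+ n.+1 = t) ->
  \det (horner_mx (companionXn n t) q) = \prod_j q.[z 0 j].
Proof.
move=> z_inj z_root; set V := Vandermonde n.+1 z.
have V_neq0 : \det V != 0.
  rewrite det_Vandermonde; apply/prodf_neq0 => i _; apply/prodf_neq0 => j ij.
  by rewrite subr_eq0; apply: contraTneq ij => /z_inj ->; rewrite ltnn.
apply: (mulIf V_neq0); rewrite -det_mulmx.
rewrite (horner_mx_intertwine _ (companionXn_Vandermonde z_root)) det_mulmx mulrC.
by rewrite horner_mx_diag det_diag; congr (_ * _); apply: eq_bigr => j _; rewrite !mxE.
Qed.

(* The base variable 'X stands for t = x^p. *)
Definition normXn (R : comNzRingType) (p : nat) (F : {poly R}) : {poly R} :=
  \det (horner_mx (companionXn p.-1 'X) (F ^:P)).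

Lemma map_normXn (R S : comNzRingType) (f : {rmorphism R -> S}) p (F : {poly R}) :
  map_poly f (normXn p F) = normXn p (map_poly f F).
Proof.
rewrite /normXn -det_map_mx map_horner_mx map_companionXn /= map_polyX.
by congr (\det (horner_mx _ _)); rewrite -!map_poly_comp; apply: eq_map_poly => c /=; rewrite map_polyC.
Qed.

Lemma normXn_comp_Xn (R : idomainType) n (w : R) (F : {poly R}) :
  n.+1.-primitive_root w ->
  normXn n.+1 F \Po 'X^(n.+1) = \prod_(j < n.+1) (F \Po ('X * (w ^+ j)%:P)).
Proof.
move=> w_prim; pose z : 'rV[{poly R}]_n.+1 := \row_j ('X * (w ^+ j)%:P).
have z_root j : z 0 j ^+ n.+1 = 'X^(n.+1).
  by rewrite mxE exprMn -rmorphXn /= exprAC (prim_expr_order w_prim) expr1n mulr1.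
have z_inj : injective (z 0).
  move=> i j; rewrite !mxE => /(mulfI (negbT (polyX_eq0 _))) /polyC_inj /eqP.
  by rewrite (eq_prim_root_expr w_prim) !modn_small // => /eqP /val_inj.
rewrite /normXn /= -det_map_mx map_horner_mx map_companionXn /= comp_polyX.
rewrite (det_horner_companionXn _ z_inj z_root); apply: eq_bigr => j _.
rewrite mxE -map_poly_comp (eq_map_poly (f := _ \o _) (g := polyC)) // => c /=.
exact: comp_polyC.
Qed.

Lemma horner_normXn (R : idomainType) n (w : R) (F : {poly R}) y :
  n.+1.-primitive_root w ->
  (normXn n.+1 F).[y ^+ n.+1] = \prod_(j < n.+1) F.[y * w ^+ j].
Proof.
move=> w_prim; rewrite -hornerXn -horner_comp (normXn_comp_Xn _ w_prim) horner_prod.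
by apply: eq_bigr => j _; rewrite horner_comp hornerM hornerX hornerC.
Qed.

Lemma pchar_exp_comp_Xn (R : comNzRingType) p (s : {poly R}) :
  p \in [pchar R] -> (forall i, s`_i ^+ p = s`_i) -> s ^+ p = s \Po 'X^p.
Proof.
move=> pchar_p s_fixed; have pchar_poly_p : p \in [pchar {poly R}] by rewrite pchar_poly.
rewrite -(pFrobenius_autE pchar_poly_p) -{1}[s]coefK poly_def rmorph_sum comp_polyE.
apply: eq_bigr => i _; rewrite -!mul_polyC rmorphM /= !pFrobenius_autE.
by rewrite -rmorphXn /= s_fixed -!exprM mulnC.
Qed.

Lemma normXn_Fp p (q : {poly 'F_p}) : prime p -> normXn p q = q.
Proof.
case: p q => [//|n] q p_prime.
have pchar_p : n.+1 \in [pchar {poly 'F_n.+1}] by rewrite pchar_poly pchar_Fp.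
have q_Frobenius : (q ^:P) ^+ n.+1 = q ^:P \Po 'X^(n.+1).
  apply: pchar_exp_comp_Xn => [|i]; first exact: pchar_p.
  by rewrite coef_map /= -rmorphXn /= -{2}(expf_card q`_i) card_Fp.
have : normXn n.+1 q ^+ n.+1 = q ^+ n.+1.
  rewrite /normXn /= -det_mxX -rmorphXn /= q_Frobenius horner_mx_comp_Xn companionXn_expS.
  rewrite -diag_const_mx horner_mx_diag map_const_mx diag_const_mx det_scalar /=.
  by rewrite [(q ^:P).[_]]comp_polyXr.
move/eqP; rewrite -subr_eq0 -!(pFrobenius_autE pchar_p) -rmorphB /= pFrobenius_autE.
by rewrite expf_eq0 subr_eq0 => /andP[_ /eqP].
Qed.

Lemma normXn_modp p (F : {poly int}) i : prime p -> ((normXn p F)`_i == F`_i %[mod p])%Z.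
Proof.
move=> p_prime; have := normXn_Fp (map_poly intr F : {poly 'F_p}) p_prime.
move/(congr1 (fun G : {poly 'F_p} => G`_i)).
rewrite -map_normXn !coef_map /= => /eqP; rewrite -subr_eq0 -rmorphB /=.
by rewrite -(dvdz_pcharf (pchar_Fp p_prime)) eqz_mod_dvd.
Qed.

Lemma prod_nat_mul_split (R : comNzRingType) q a (h : nat -> R) :
  \prod_(0 <= m < q * a) h m = \prod_(j < q) \prod_(0 <= l < a) h (l + j * a)%N.
Proof.
rewrite big_nat_mul big_mkord; apply: eq_bigr => j _.
by rewrite mulSn addnC -{1}[(j * a)%N]add0n big_addn addKn.
Qed.

Lemma prod_coprime_split (R : comNzRingType) p a (f : nat -> R) : (p %| a)%N ->
  \prod_(1 <= m < (a * p).+1 | ~~ (p %| m)%N) f m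
  = \prod_(1 <= l < a.+1 | ~~ (p %| l)%N) \prod_(j < p) f (l + a * j)%N.
Proof.
move=> p_dvd_a; rewrite !big_add1 /= !big_mkcond /= mulnC prod_nat_mul_split.
rewrite exchange_big [RHS]big_mkcond /=; apply: eq_bigr => l _.
have dvd_shift (j : nat) : (p %| (l + j * a).+1)%N = (p %| l.+1)%N.
  by rewrite -addSn dvdn_addl // dvdn_mull.
case: ifP => p_ndvd_l.
  by apply: eq_bigr => j _; rewrite dvd_shift p_ndvd_l -addSn mulnC.
by apply: big1 => j _; rewrite dvd_shift p_ndvd_l.
Qed.

Lemma comp_poly_Xn_inj (R : nzRingType) k : (0 < k)%N -> injective (comp_poly ('X^k : {poly R})).
Proof.
move=> k_gt0 a b ab; apply/polyP => i.
have := congr1 (fun q : {poly R} => q`_(i * k)%N) ab; rewrite /= !coef_comp_poly_Xn //.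
by rewrite dvdn_mull // mulnK.
Qed.

Lemma cube_norm_form (R : comNzRingType) (w a b c : R) : 1 + w + w ^+ 2 = 0 ->
  (a + b + c) * (a + w * b + w ^+ 2 * c) * (a + w ^+ 2 * b + w ^+ 4 * c)
  = a ^+ 3 + b ^+ 3 + c ^+ 3 - 3%:R * a * b * c.
Proof.
move=> w_cyc.
have w3 : w ^+ 3 = 1.
  apply/eqP; rewrite -subr_eq0; apply/eqP.
  by transitivity ((w - 1) * (1 + w + w ^+ 2)); [ring | rewrite w_cyc mulr0].
transitivity ((a + b + c) * (a ^+ 2 + w ^+ 3 * b ^+ 2 + (w ^+ 3) ^+ 2 * c ^+ 2
   + (w + w ^+ 2) * (a * b) + (w ^+ 3 * w + w ^+ 2) * (a * c) + w ^+ 3 * (w + w ^+ 2) * (b * c))).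
  by ring.
rewrite w3 expr1n !mul1r.
transitivity (a ^+ 3 + b ^+ 3 + c ^+ 3 - 3%:R * a * b * c
   + (a + b + c) * (1 + w + w ^+ 2) * (a * b + a * c + b * c)).
  by ring.
by rewrite w_cyc mulr0 mul0r addr0.
Qed.

Lemma prim_root3_sum (R : idomainType) (w : R) : 3.-primitive_root w -> 1 + w + w ^+ 2 = 0.
Proof.
move=> w_prim; have w_neq1 : w - 1 != 0.
  by rewrite subr_eq0 -[w]expr1 -(prim_order_dvd w_prim).
apply: (mulfI w_neq1); rewrite mulr0.
by transitivity (w ^+ 3 - 1); [ring | rewrite (prim_expr_order w_prim) subrr].
Qed.

Lemma normX3 (R : idomainType) (w : R) (f0 f1 f2 : {poly R}) : 3.-primitive_root w ->
  normXn 3 (f0 \Po 'X^3 + 'X * (f1 \Po 'X^3) + 'X^2 * (f2 \Po 'X^3))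
  = f0 ^+ 3 + 'X * f1 ^+ 3 + 'X^2 * f2 ^+ 3 - 3%:R *: ('X * f0 * f1 * f2).
Proof.
move=> w_prim; apply: (@comp_poly_Xn_inj _ 3) => //=.
rewrite (normXn_comp_Xn _ w_prim).
set a := f0 \Po 'X^3; set b := f1 \Po 'X^3; set c := f2 \Po 'X^3.
have conj_j (j : nat) : (a + 'X * b + 'X^2 * c) \Po ('X * (w ^+ j)%:P)
    = a + (w%:P) ^+ j * ('X * b) + ((w%:P) ^+ j) ^+ 2 * ('X^2 * c).
  have X3_fixed : 'X^3 \Po ('X * (w ^+ j)%:P) = 'X^3.
    rewrite comp_Xn_poly exprMn -rmorphXn /= exprAC (prim_expr_order w_prim) expr1n.
    by rewrite mulr1.
  rewrite !comp_polyD !comp_polyM comp_polyX /a /b /c -!comp_polyA X3_fixed rmorphXn /=.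
  ring.
have W_cyc : 1 + w%:P + w%:P ^+ 2 = 0 :> {poly R}.
  by rewrite -rmorphXn -!rmorphD /= prim_root3_sum.
rewrite !big_ord_recl big_ord0 mulr1 /= !conj_j /bump /=.
transitivity ((a + 'X * b + 'X^2 * c) * (a + w%:P * ('X * b) + w%:P ^+ 2 * ('X^2 * c))
   * (a + w%:P ^+ 2 * ('X * b) + w%:P ^+ 4 * ('X^2 * c))); first by ring.
rewrite cube_norm_form // scaler_nat rmorphB !rmorphD !rmorphM /= comp_polyX.
by rewrite -/a -/b -/c; ring.
Qed.

Definition cis (x : Rdefinitions.R) : C := Complex (cos x) (sin x).
Arguments cis x%_ring_scope.

Lemma cisD x y : cis x * cis y = cis (x + y).
Proof.
rewrite /cis /GRing.mul /= [cos (x + y)](cos_plus x y) [sin (x + y)](sin_plus x y).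
by rewrite ?RmultE ?RminusE ?RplusE; congr Complex; ring.
Qed.

Lemma cisMn x m : cis x ^+ m = cis (m%:R * x).
Proof.
elim: m => [|m IH]; first by rewrite mul0r /cis cos_0 sin_0.
by rewrite exprS IH cisD -{1}(mul1r x) -mulrDl -natr1 addrC.
Qed.

Lemma IZR2 : IZR 2 = 2%:R :> Rdefinitions.R.
Proof. by change (IZR 2 = Rplus (IZR 1) (IZR 1)); rewrite -plus_IZR. Qed.

Lemma PI_gt0 : 0 < PI :> Rdefinitions.R.
Proof. exact/RltP/PI_RGT_0. Qed.

Lemma cis_2PI : cis (2%:R * PI) = 1.
Proof. by rewrite /cis -IZR2 -RmultE cos_2PI sin_2PI. Qed.

Lemma cis_neq1 x : 0 < x -> x < 2%:R * PI -> cis x != 1.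
Proof.
move=> x_gt0 x_lt2PI; rewrite eq_complex /=; apply/negP => /andP [/eqP cosx1 /eqP sinx0].
case: (ltrgtP x PI) => [x_ltPI|x_gtPI|x_PI].
- by move: (sin_gt_0 x (elimT RltP x_gt0) (elimT RltP x_ltPI)); rewrite sinx0 => /Rlt_irrefl.
- have x_lt2PI' : Rlt x (2 * PI) by apply/RltP; rewrite IZR2.
  by move: (sin_lt_0 x (elimT RltP x_gtPI) x_lt2PI'); rewrite sinx0 => /Rlt_irrefl.
- have : IZR (-1) < 1 by apply/RltP/IZR_lt.
  by rewrite -cos_PI -x_PI cosx1 ltxx.
Qed.

Lemma omegaE p k : omega p k = cis (2%:R * PI / (p ^ k)%:R).
Proof. by rewrite /omega /cis IZR2. Qed.

Lemma omega0 p : omega p 0 = 1.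
Proof. by rewrite omegaE expn0 divr1 cis_2PI. Qed.

Lemma omega_expn p k j : (0 < p)%N -> omega p (k + j) ^+ (p ^ j) = omega p k.
Proof.
move=> p_gt0; rewrite !omegaE cisMn expnD natrM; congr cis.
by field; rewrite !pnatr_eq0 -!lt0n !expn_gt0 p_gt0.
Qed.

Lemma omega_prim p k : (0 < p)%N -> (p ^ k).-primitive_root (omega p k).
Proof.
move=> p_gt0; have pk_gt0 : (0 < p ^ k)%N by rewrite expn_gt0 p_gt0.
apply/andP; split=> //; apply/forallP => i; rewrite unity_rootE.
have [->|i_neq] := eqVneq i.+1 (p ^ k)%N.
  by rewrite -{1}[k]add0n omega_expn // omega0 !eqxx.
have i_lt : (i.+1 < p ^ k)%N by rewrite ltn_neqAle i_neq ltn_ord.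
have PI2_gt0 : 0 < 2%:R * PI :> Rdefinitions.R by rewrite mulr_gt0 ?PI_gt0.
rewrite eqbF_neg omegaE cisMn cis_neq1 //.
  by rewrite mulr_gt0 ?divr_gt0 ?ltr0n.
by rewrite mulrA ltr_pdivrMr ?ltr0n // mulrC ltr_pM2l // ltr_nat.
Qed.

Lemma omega1_prim n : n.+1.-primitive_root (omega n.+1 1).
Proof. by have := omega_prim 1 (ltn0Sn n); rewrite expn1. Qed.

Lemma Hpoly_normXn n F : Hpoly n.+1 F = polyC_of_int (normXn n.+1 F \Po 'X^(n.+1)).
Proof.
by rewrite /polyC_of_int map_comp_poly map_polyXn map_normXn (normXn_comp_Xn _ (omega1_prim n)).
Qed.

Lemma horner_normXn_omega n F y :
  (polyC_of_int (normXn n.+1 F)).[y ^+ n.+1]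
  = \prod_(j < n.+1) (polyC_of_int F).[y * omega n.+1 1 ^+ j].
Proof. by rewrite /polyC_of_int map_normXn (horner_normXn _ _ (omega1_prim n)). Qed.

Lemma Nk_normXn n k F : Nk n.+1 k.+2 F = Nk n.+1 k.+1 (normXn n.+1 F).
Proof.
rewrite /Nk expnSr prod_coprime_split ?dvdn_exp //; apply: eq_bigr => l _.
rewrite -(omega_expn k.+1 1 (ltn0Sn n)) addn1 expn1 exprAC horner_normXn_omega.
apply: eq_bigr => j _.
by rewrite -[omega _ 1](omega_expn 1 k.+1 (ltn0Sn n)) add1n -exprM -exprD.
Qed.

Lemma Nk1_normXn n F :
  (polyC_of_int F).[1] * Nk n.+1 1 F = (normXn n.+1 F).[1]%:~R.
Proof.
rewrite -[RHS](horner_map intr) rmorph1 -[in RHS](expr1n _ n.+1) horner_normXn_omega.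
rewrite big_ord_recl !mul1r expr0; congr (_ * _).
rewrite /Nk expn1 big_mkcond big_nat_recr //= dvdnn mulr1 big_add1 big_mkord.
apply: eq_bigr => i _.
by rewrite gtnNdvd ?ltnS //= (mul1r (omega _ _ ^+ _)).
Qed.

Lemma normX3_int (f0 f1 f2 : {poly int}) :
  normXn 3 (f0 \Po 'X^3 + 'X * (f1 \Po 'X^3) + 'X^2 * (f2 \Po 'X^3))
  = f0 ^+ 3 + 'X * f1 ^+ 3 + 'X^2 * f2 ^+ 3 - 3%:R *: ('X * f0 * f1 * f2).
Proof.
apply: (@map_inj_poly _ _ (intr : int -> C)) => [x y /intr_inj //|//|].
set fC := map_poly (intr : int -> C).
transitivity (normXn 3 (fC f0 \Po 'X^3 + 'X * (fC f1 \Po 'X^3) + 'X^2 * (fC f2 \Po 'X^3))).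
  by rewrite /fC map_normXn !rmorphD !rmorphM /= !map_comp_poly !map_polyXn map_polyX.
rewrite (normX3 _ _ _ (omega1_prim 2)) !scaler_nat.
by rewrite /fC !rmorphB !rmorphD !rmorphM /= map_polyX; ring.
Qed.

Theorem lemma2p4 (p : nat) (F : {poly int}) :
  prime p ->
  exists g : {poly int},
    [/\ Hpoly p F = polyC_of_int (g \Po 'X^p),
        (forall i : nat, (g`_i == F`_i %[mod (p%:Z)])%Z),
        (forall i : nat, (2 <= i)%N -> Nk p i F = Nk p i.-1 g),
        (polyC_of_int F).[1] * Nk p 1 F = (g.[1])%:~R
      & (p = 3%N ->
         forall f0 f1 f2 : {poly int},
           F = f0 \Po 'X^3 + 'X * (f1 \Po 'X^3) + 'X^2 * (f2 \Po 'X^3) ->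
           g = f0 ^+ 3 + 'X * f1 ^+ 3 + 'X^2 * f2 ^+ 3 - 3%:R *: ('X * f0 * f1 * f2))].
Proof.
case: p => [//|n] p_prime; exists (normXn n.+1 F); split.
- exact: Hpoly_normXn.
- by move=> i; exact: normXn_modp.
- by case=> [|[|k]] //= _; exact: Nk_normXn.
- exact: Nk1_normXn.
- by case=> -> f0 f1 f2 ->; exact: normX3_int.
Qed.
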